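(* In the two-type heterogeneous SIS model described in the context, with $x_i=\lambda_i\widetilde d_i$ for $i=1,2$: (1) if $x_1>1$ and $x_2>1$, then diffusion occurs from a small seed for every $\pi\in(0,1)$; (2) if $x_1\le 1$ and $x_2\le 1$, then diffusion does not occur from a small seed for any $\pi\in(0,1)$; (3) if $x_1>1$ and $x_2\le 1$ (or $x_2>1$ and $x_1\le1$), then there exists $\pi^*\in(0,1)$ such that diffusion occurs from a small seed for every $\pi\in(\pi^*,1)$.
   Context: There are two types of agents, $i\in\{1,2\}$. For each type $i$, $P_i$ is a probability distribution on the nonnegative integers (degree distribution), with mean $\langle d\rangle_i=\sum_d P_i(d)d>0$ and finite second moment $\langle d^2\rangle_i=\sum_dP_i(d)d^2$; let $\widetilde d_i=\langle d^2\rangle_i/\langle d\rangle_i$. Each meeting of a type-$i$ agent is with its own type with probability $\pi\in(0,1)$ and with the other type with probability $1-\pi$. In the SIS process a susceptible type-$i$ agent becomes infected at rate $\nu_i>0$ per infected agent met, infected type-$i$ agents recover at rate $\delta_i>0$, $\lambda_i=\nu_i/\delta_i$, and meetings are biased proportionally to degree. Let $x_i=\lambda_i\widetilde d_i$ and $$A=\begin{pmatrix}\pi x_1 & (1-\pi)x_2\\ (1-\pi)x_1 & \pi x_2\end{pmatrix}.$$ Diffusion occurs from a small seed means: for every $\varepsilon>0$ there exists $v\in\mathbb{R}^2$ with $0<v_i<\varepsilon$ and $(Av)_i>v_i$ for $i=1,2$. (The condition $x_i>1$ is the condition for diffusion within type $i$ when isolated, i.e. at $\pi=1$.) *)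

From Stdlib Require Import Reals.
From Coquelicot Require Import Coquelicot.
Open Scope R_scope.

Definition degree_distribution (P : nat -> R) : Prop :=
  (forall d, 0 <= P d) /\
  is_series P 1 /\
  ex_series (fun d => P d * INR d ^ 2) /\
  0 < Series (fun d => P d * INR d).

Definition mean_deg (P : nat -> R) : R := Series (fun d => P d * INR d).
Definition second_moment (P : nat -> R) : R := Series (fun d => P d * INR d ^ 2).
Definition dtilde (P : nat -> R) : R := second_moment P / mean_deg P.

(* x_i = lambda_i * d~_i with lambda_i = nu_i / delta_i. *)
Definition xval (nu delta : R) (P : nat -> R) : R := (nu / delta) * dtilde P.

(* (A v)_i for A = [[pi x1, (1-pi) x2]; [(1-pi) x1, pi x2]]. *)
Definition Av1 (pi x1 x2 v1 v2 : R) : R := pi * x1 * v1 + (1 - pi) * x2 * v2.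
Definition Av2 (pi x1 x2 v1 v2 : R) : R := (1 - pi) * x1 * v1 + pi * x2 * v2.

Definition diffusion_small_seed (pi x1 x2 : R) : Prop :=
  forall eps, 0 < eps ->
    exists v1 v2, 0 < v1 < eps /\ 0 < v2 < eps /\
      Av1 pi x1 x2 v1 v2 > v1 /\ Av2 pi x1 x2 v1 v2 > v2.

(* Since A is linear, diffusion from a small seed only asks for one positive
   direction w with A w > w componentwise: scaling w down gives seeds below any
   eps.  If both x_i > 1 then w = (1,1) works for every pi.  If both x_i <= 1,
   the column sums of A are x_1 and x_2, so (A v)_1 + (A v)_2 <= v_1 + v_2 and
   no seed grows in both coordinates.  If only x_1 > 1, then for pi > 1/x_1 the
   direction (1,t) with t small works, the type-2 coordinate being fed by
   type 1. *)

From Stdlib Require Import Reals Lra Psatz.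
From Coquelicot Require Import Coquelicot.
Open Scope R_scope.

Definition growth_direction (pi x1 x2 w1 w2 : R) : Prop :=
  0 < w1 /\ 0 < w2 /\ Av1 pi x1 x2 w1 w2 > w1 /\ Av2 pi x1 x2 w1 w2 > w2.

Lemma Av1_scale (pi x1 x2 s w1 w2 : R) :
  Av1 pi x1 x2 (s * w1) (s * w2) = s * Av1 pi x1 x2 w1 w2.
Proof. unfold Av1; ring. Qed.

Lemma Av2_scale (pi x1 x2 s w1 w2 : R) :
  Av2 pi x1 x2 (s * w1) (s * w2) = s * Av2 pi x1 x2 w1 w2.
Proof. unfold Av2; ring. Qed.

Lemma diffusion_of_growth_direction (pi x1 x2 w1 w2 : R) :
  growth_direction pi x1 x2 w1 w2 -> diffusion_small_seed pi x1 x2.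
Proof.
  intros (Hw1 & Hw2 & HA1 & HA2) eps Heps.
  set (s := eps / (w1 + w2)).
  assert (Hs : 0 < s) by (unfold s; apply Rdiv_lt_0_compat; lra).
  assert (Hsw : s * (w1 + w2) = eps) by (unfold s; field; lra).
  exists (s * w1), (s * w2).
  rewrite Av1_scale, Av2_scale.
  repeat split; nra.
Qed.

Lemma diffusion_small_seed_sym (pi x1 x2 : R) :
  diffusion_small_seed pi x1 x2 -> diffusion_small_seed pi x2 x1.
Proof.
  intros Hd eps Heps.
  destruct (Hd eps Heps) as (v1 & v2 & Hv1 & Hv2 & HA1 & HA2).
  exists v2, v1; unfold Av1, Av2 in *; repeat split; lra.
Qed.

Lemma diffusion_both_supercritical (pi x1 x2 : R) :
  0 <= pi <= 1 -> 1 < x1 -> 1 < x2 -> diffusion_small_seed pi x1 x2.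
Proof.
  intros Hpi H1 H2.
  apply (diffusion_of_growth_direction pi x1 x2 1 1).
  unfold growth_direction, Av1, Av2.
  destruct (Rle_dec x1 x2); repeat split; nra.
Qed.

Lemma no_diffusion_both_subcritical (pi x1 x2 : R) :
  x1 <= 1 -> x2 <= 1 -> ~ diffusion_small_seed pi x1 x2.
Proof.
  intros H1 H2 Hd.
  destruct (Hd 1 Rlt_0_1) as (v1 & v2 & Hv1 & Hv2 & HA1 & HA2).
  assert (Hsum : Av1 pi x1 x2 v1 v2 + Av2 pi x1 x2 v1 v2 = x1 * v1 + x2 * v2)
    by (unfold Av1, Av2; ring).
  nra.
Qed.

Lemma diffusion_of_own_type_growth (pi x1 x2 : R) :
  0 < pi < 1 -> 1 < pi * x1 -> diffusion_small_seed pi x1 x2.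
Proof.
  intros Hpi Hpx.
  set (c := Rmin ((1 - pi) * x1) (pi * x1 - 1)).
  assert (Hc1 : c <= (1 - pi) * x1) by apply Rmin_l.
  assert (Hc2 : c <= pi * x1 - 1) by apply Rmin_r.
  assert (Hc : 0 < c) by (apply Rmin_pos; nra).
  assert (Hx2 : - Rabs x2 <= x2 <= Rabs x2).
  { pose proof (Rle_abs (- x2)) as Hneg; rewrite Rabs_Ropp in Hneg.
    pose proof (Rle_abs x2); lra. }
  set (t := c / (2 * (1 + Rabs x2))).
  assert (Ht : 0 < t)
    by (unfold t; apply Rdiv_lt_0_compat; pose proof (Rabs_pos x2); lra).
  assert (HtB : t + t * Rabs x2 = c / 2)
    by (unfold t; field; pose proof (Rabs_pos x2); lra).
  (* t * |x2| < c / 2 absorbs the cross term of either sign *)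
  assert (Hcross : forall q, 0 <= q <= 1 -> q * x2 * t >= - (t * Rabs x2)).
  { intros q Hq; assert (0 <= q * x2 + Rabs x2) by nra; nra. }
  pose proof (Hcross (1 - pi) ltac:(lra)); pose proof (Hcross pi ltac:(lra)).
  apply (diffusion_of_growth_direction pi x1 x2 1 t).
  unfold growth_direction, Av1, Av2; repeat split; lra.
Qed.

Lemma own_type_threshold (x : R) :
  1 < x -> exists pistar, 0 < pistar < 1 /\ forall pi, pistar < pi -> 1 < pi * x.
Proof.
  intros Hx.
  assert (Hinv : 0 < / x < 1)
    by (split; [apply Rinv_0_lt_compat | rewrite <- Rinv_1; apply Rinv_lt_contravar]; lra).
  exists ((1 + / x) / 2); split; [lra|].
  intros pi Hpi.
  assert (Hxinv : / x * x = 1) by (field; lra).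
  nra.
Qed.

(* The degree distributions, infection and recovery rates only enter through
   x1 and x2. *)
Theorem corollary1 (P1 P2 : nat -> R) (nu1 nu2 delta1 delta2 : R)
  (hP1 : degree_distribution P1) (hP2 : degree_distribution P2)
  (hnu1 : 0 < nu1) (hnu2 : 0 < nu2) (hd1 : 0 < delta1) (hd2 : 0 < delta2) :
  let x1 := xval nu1 delta1 P1 in
  let x2 := xval nu2 delta2 P2 in
  ((1 < x1 /\ 1 < x2) ->
     forall pi, 0 < pi < 1 -> diffusion_small_seed pi x1 x2) /\
  ((x1 <= 1 /\ x2 <= 1) ->
     forall pi, 0 < pi < 1 -> ~ diffusion_small_seed pi x1 x2) /\
  (((1 < x1 /\ x2 <= 1) \/ (1 < x2 /\ x1 <= 1)) ->
     exists pistar, 0 < pistar < 1 /\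
       forall pi, pistar < pi < 1 -> diffusion_small_seed pi x1 x2).
Proof.
  intros x1 x2; clearbody x1 x2.
  split; [|split].
  - intros [H1 H2] pi Hpi.
    apply diffusion_both_supercritical; lra.
  - intros [H1 H2] pi _.
    now apply no_diffusion_both_subcritical.
  - intros [[H1 _] | [H2 _]].
    + destruct (own_type_threshold x1 H1) as (pistar & Hps & Hgrow).
      exists pistar; split; [exact Hps|].
      intros pi Hpi.
      apply diffusion_of_own_type_growth; [lra | apply Hgrow; lra].
    + destruct (own_type_threshold x2 H2) as (pistar & Hps & Hgrow).
      exists pistar; split; [exact Hps|].
      intros pi Hpi.
      apply diffusion_small_seed_sym, diffusion_of_own_type_growth;
        [lra | apply Hgrow; lra].
Qed.
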